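(* Fix $2\le d\le7$, let $(a,b,c)$ be given by: $d=2$: $(0.5,0.7,0.27)$; $d=3$: $(0.4,0.6,0.2)$; $d=4$: $(0.3,0.5,0.1)$; $d=5$: $(0.3,0.4,0.1)$; $d=6$: $(0.27,0.32,0.1)$; $d=7$: $(0.26,0.27,0.01)$, and let $x\in\mathcal{S}_{a,b,c}$. Then for every $n\ge2$ (partial derivatives evaluated at $x$): $\left|\frac{\partial\psi_n}{\partial x_{n-1}}\right|\le\frac{4d(d-1)^{d-1}(1+c+c^2)^d}{(d+1)^{d+1}(1+c)^{d-1}}$ for $d=2$; $\left|\frac{\partial\psi_n}{\partial x_{n-1}}\right|\le\frac{db^{d-1}(1+c+c^2)^d}{(1+b)(1+b+bc)^{d}}$ for $3\le d\le7$; $\left|\frac{\partial\psi_n}{\partial x_{n}}\right|\le\left|\frac{\partial\psi_n}{\partial x_{n-1}}\right|\cdot b(1+c+bc)$; $\left|\frac{\partial\psi_n}{\partial x_{n+1}}\right|\le\frac{db^dc(1+c+c^2)^{d-1}}{(1+b+bc)^d}$.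
   Context: For $n\ge2$, $\psi_n(x)=x_{n-1}^d\big(\frac{1+x_n+x_nx_{n+1}}{1+x_{n-1}+x_{n-1}x_n}\big)^d$. $\mathcal{R}$ is the set of sequences $(x_i)_{i\ge1}$ with $x_i=z_i/z_{i-1}$ ($x_i=0$ if $z_{i-1}=0$) for $z$ a symmetric probability distribution on $\mathbb{Z}$ whose support is an interval or all of $\mathbb{Z}$, and $\mathcal{S}_{a,b,c}:=\{x\in\mathcal{R}: a\le x_1\le b,\ 0\le x_n\le c\ \forall n\ge2\}$. *)

From Stdlib Require Import Reals Lra ZArith.
From Coquelicot Require Import Coquelicot.
Open Scope R_scope.

Definition sym_prob_interval (z : Z -> R) : Prop :=
  (forall i, 0 <= z i) /\
  (forall i, z (- i)%Z = z i) /\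
  (* total mass 1: sum over i >= 0 of z i plus sum over i <= -1 of z i *)
  is_series (fun n : nat => z (Z.of_nat n) + z (- Z.of_nat (S n))%Z) 1 /\
  (forall i j k : Z, (i <= j <= k)%Z -> 0 < z i -> 0 < z k -> 0 < z j).

(* The set R of sequences (x_i)_{i>=1}; x : nat -> R, the value x 0 is unused. *)
Definition in_calR (x : nat -> R) : Prop :=
  exists z : Z -> R, sym_prob_interval z /\
    forall i : nat, (1 <= i)%nat ->
      x i = if Req_EM_T (z (Z.of_nat i - 1)%Z) 0 then 0
            else z (Z.of_nat i) / z (Z.of_nat i - 1)%Z.

Definition in_S (a b c : R) (x : nat -> R) : Prop :=
  in_calR x /\ a <= x 1%nat <= b /\ (forall n : nat, (2 <= n)%nat -> 0 <= x n <= c).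

Definition psi (d : nat) (u v w : R) : R :=
  u ^ d * ((1 + v + v * w) / (1 + u + u * v)) ^ d.

Definition psi_n (d n : nat) (x : nat -> R) : R :=
  psi d (x (n - 1)%nat) (x n) (x (n + 1)%nat).

Definition dpsi_prev (d n : nat) (x : nat -> R) : R :=
  Derive (fun t => psi d t (x n) (x (n + 1)%nat)) (x (n - 1)%nat).
Definition dpsi_cur (d n : nat) (x : nat -> R) : R :=
  Derive (fun t => psi d (x (n - 1)%nat) t (x (n + 1)%nat)) (x n).
Definition dpsi_next (d n : nat) (x : nat -> R) : R :=
  Derive (fun t => psi d (x (n - 1)%nat) (x n) t) (x (n + 1)%nat).

Definition abc (d : nat) : R * R * R :=
  match d with
  | 2%nat => (5/10, 7/10, 27/100)
  | 3%nat => (4/10, 6/10, 2/10)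
  | 4%nat => (3/10, 5/10, 1/10)
  | 5%nat => (3/10, 4/10, 1/10)
  | 6%nat => (27/100, 32/100, 1/10)
  | _ => (26/100, 27/100, 1/100)
  end.

From Stdlib Require Import Reals Lra Lia.
From Coquelicot Require Import Coquelicot.
Open Scope R_scope.

(* Write psi = u^d N^d / D^d with N = 1 + v + v w and D = 1 + u + u v.  The three partial
   derivatives have closed forms, nonnegative on the box 0 <= u <= b, 0 <= v, w <= c, and
   d_v psi = d_u psi * u (1 + w + u w) / N with N >= 1.  The other bounds come from
   monotonicity in u, v, w separately: u / D and v / (1 + b + b v) increase, N / (1 + b + b v)
   is largest at v = w = c, and for d >= 3, u^(d-1) / D^(d+1) increases in u as long as
   (1 + v) b <= 1.  For d = 2 the factor u / D^3 is bounded instead by the AM-GM inequality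
   27 s <= 4 (1 + s)^3 with s = u (1 + v). *)

Lemma pow_div x y n : (x / y) ^ n = x ^ n / y ^ n.
Proof. unfold Rdiv; rewrite Rpow_mult_distr, pow_inv; reflexivity. Qed.

Lemma Rdiv_le_cross x y x' y' : 0 < y -> 0 < y' -> x * y' <= x' * y -> x / y <= x' / y'.
Proof.
  intros Hy Hy' H.
  replace (x / y) with (x * y' * / (y * y')) by (field; lra).
  replace (x' / y') with (x' * y * / (y * y')) by (field; lra).
  apply Rmult_le_compat_r; [apply Rlt_le, Rinv_0_lt_compat, Rmult_lt_0_compat |]; assumption.
Qed.

Lemma div_affine_le a k s t : 0 < a -> 0 <= k -> 0 <= s <= t ->
  s / (a + k * s) <= t / (a + k * t).
Proof. intros; apply Rdiv_le_cross; nra. Qed.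

Lemma cube_am_gm s : 0 <= s -> 27 * s <= 4 * (1 + s) ^ 3.
Proof.
  intros Hs.
  assert (4 * (1 + s) ^ 3 - 27 * s = (2 * s - 1) ^ 2 * (s + 4)) by ring.
  assert (0 <= (2 * s - 1) ^ 2 * (s + 4)) by (apply Rmult_le_pos; [apply pow2_ge_0 | lra]).
  lra.
Qed.

Lemma pow_div_pow_add2_le m k s t : (2 <= m)%nat -> 0 <= k -> 0 <= s <= t -> k * t <= 1 ->
  s ^ m / (1 + k * s) ^ (m + 2) <= t ^ m / (1 + k * t) ^ (m + 2).
Proof.
  intros Hm Hk Hst Hkt.
  assert (lin : s * (1 + k * t) <= t * (1 + k * s)) by nra.
  assert (quad : s * (1 + k * t) ^ 2 <= t * (1 + k * s) ^ 2).
  { assert (t * (1 + k * s) ^ 2 - s * (1 + k * t) ^ 2 = (t - s) * (1 - k * s * (k * t))) by ring.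
    assert (0 <= k * s <= k * t) by (split; [apply Rmult_le_pos | apply Rmult_le_compat_l]; lra).
    assert (k * s * (k * t) <= 1) by nra.
    nra. }
  apply Rdiv_le_cross; [apply pow_lt; nra.. |].
  replace m with (m - 2 + 2)%nat by lia.
  replace (m - 2 + 2 + 2)%nat with (m - 2 + 4)%nat by lia.
  assert (split : forall p q, p ^ (m - 2 + 2) * q ^ (m - 2 + 4) = (p * q) ^ (m - 2) * (p * q ^ 2) ^ 2).
  { intros p q. rewrite !pow_add, !Rpow_mult_distr. ring. }
  rewrite !split.
  assert (0 <= k * t) by (apply Rmult_le_pos; lra).
  assert (0 <= s * (1 + k * t)) by (apply Rmult_le_pos; lra).
  assert (0 <= s * (1 + k * t) ^ 2) by (apply Rmult_le_pos; [lra | apply pow2_ge_0]).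
  apply Rmult_le_compat; try apply pow_le; try apply pow_incr; auto.
Qed.

Lemma psi_num_div_den_le b c v w : 0 <= b -> 0 <= v <= c -> 0 <= w <= c ->
  (1 + v + v * w) / (1 + b + b * v) <= (1 + c + c ^ 2) / (1 + b + b * c).
Proof.
  intros Hb Hv Hw.
  apply Rdiv_le_cross; try nra.
  assert ((1 + v * (1 + c)) * (1 + b + b * c) - (1 + c + c ^ 2) * (1 + b + b * v)
          = (v - c) * (1 + c + b * c)) by ring.
  assert ((v - c) * (1 + c + b * c) <= 0) by (apply Rmult_le_0_r; nra).
  assert (v * w <= v * c) by (apply Rmult_le_compat_l; lra).
  assert (0 <= 1 + b + b * c) by nra.
  nra.
Qed.

Lemma psi_num_sq_div_le c v w : 0 <= v <= c -> 0 <= w <= c ->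
  (1 + v + v * w) ^ 2 / (1 + v) <= (1 + c + c ^ 2) ^ 2 / (1 + c).
Proof.
  intros Hv Hw.
  apply Rdiv_le_cross; try lra.
  assert (HN : 0 <= 1 + v + v * w <= 1 + (1 + c) * v) by nra.
  assert ((1 + c + c ^ 2) ^ 2 * (1 + v) - (1 + (1 + c) * v) ^ 2 * (1 + c)
          = (c - v) * ((1 + c) ^ 3 * v + 1 + 2 * c + (1 + c) ^ 2 * c)) by ring.
  assert (0 <= (c - v) * ((1 + c) ^ 3 * v + 1 + 2 * c + (1 + c) ^ 2 * c)) by (apply Rmult_le_pos; nra).
  assert ((1 + v + v * w) ^ 2 <= (1 + (1 + c) * v) ^ 2) by (apply pow_incr; lra).
  nra.
Qed.

Definition psi_du (d : nat) (u v w : R) : R :=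
  INR d * u ^ (d - 1) * (1 + v + v * w) ^ d / (1 + u + u * v) ^ (d + 1).
Definition psi_dv (d : nat) (u v w : R) : R :=
  INR d * u ^ d * (1 + v + v * w) ^ (d - 1) * (1 + w + u * w) / (1 + u + u * v) ^ (d + 1).
Definition psi_dw (d : nat) (u v w : R) : R :=
  INR d * u ^ d * v * (1 + v + v * w) ^ (d - 1) / (1 + u + u * v) ^ d.

(* auto_derive leaves an equation over the carrier of R_AbsRing, which field does not
   recognise as R; field also rejects the constant INR 0. *)
Ltac close_derive d :=
  auto_derive; [lra|];
  lazymatch goal with |- ?l = ?r => change (@eq R l r) end;
  destruct d;
  rewrite ?INR_0, ?S_INR, ?Nat.sub_succ, ?Nat.sub_0_r, ?Nat.add_1_r, ?Rpow_mult_distr, ?pow_inv;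
  simpl pow; simpl pred; field; repeat split; try apply pow_nonzero; lra.

Lemma Derive_psi_u d u v w : 1 + u + u * v <> 0 ->
  Derive (fun t => psi d t v w) u = psi_du d u v w.
Proof. intros; apply is_derive_unique; unfold psi, psi_du; close_derive d. Qed.
Lemma Derive_psi_v d u v w : 1 + u + u * v <> 0 ->
  Derive (fun t => psi d u t w) v = psi_dv d u v w.
Proof. intros; apply is_derive_unique; unfold psi, psi_dv; close_derive d. Qed.
Lemma Derive_psi_w d u v w : 1 + u + u * v <> 0 ->
  Derive (fun t => psi d u v t) w = psi_dw d u v w.
Proof. intros; apply is_derive_unique; unfold psi, psi_dw; close_derive d. Qed.

Section PartialBounds.

Variables b c u v w : R.
Hypotheses (Hu0 : 0 <= u) (Hub : u <= b) (Hv : 0 <= v <= c) (Hw : 0 <= w <= c).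

Ltac nonneg :=
  apply Rdiv_le_0_compat; repeat apply Rmult_le_pos;
  try apply pos_INR; try apply pow_le; try apply pow_lt; nra.

Lemma psi_du_nonneg d : 0 <= psi_du d u v w.
Proof using Hu0 Hv Hw. unfold psi_du; nonneg. Qed.

Lemma psi_dv_nonneg d : 0 <= psi_dv d u v w.
Proof using Hu0 Hv Hw. unfold psi_dv; nonneg. Qed.

Lemma psi_dw_nonneg d : 0 <= psi_dw d u v w.
Proof using Hu0 Hv Hw. unfold psi_dw; nonneg. Qed.

Lemma u_div_den_le : u / (1 + u + u * v) <= b / (1 + b + b * v).
Proof using Hu0 Hub Hv.
  replace (1 + u + u * v) with (1 + (1 + v) * u) by ring.
  replace (1 + b + b * v) with (1 + (1 + v) * b) by ring.
  apply div_affine_le; lra.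
Qed.

Lemma v_div_den_le : v / (1 + b + b * v) <= c / (1 + b + b * c).
Proof using Hu0 Hub Hv.
  replace (1 + b + b * v) with ((1 + b) + b * v) by ring.
  replace (1 + b + b * c) with ((1 + b) + b * c) by ring.
  apply div_affine_le; lra.
Qed.

Lemma psi_dv_le d : psi_dv d u v w <= psi_du d u v w * (b * (1 + c + b * c)).
Proof using Hu0 Hub Hv Hw.
  assert (HN : 1 <= 1 + v + v * w) by nra.
  assert (Hfactor : psi_dv d u v w = psi_du d u v w * (u * (1 + w + u * w) / (1 + v + v * w))).
  { unfold psi_dv, psi_du; destruct d as [|m].
    - rewrite INR_0; unfold Rdiv; ring.
    - rewrite Nat.sub_succ, Nat.sub_0_r; simpl pow; field; repeat split; try apply pow_nonzero; nra. }
  rewrite Hfactor; apply Rmult_le_compat_l; [apply psi_du_nonneg|].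
  apply Rle_div_l; [lra|].
  assert (u * w <= b * c) by (apply Rmult_le_compat; lra).
  assert (u * (1 + w + u * w) <= b * (1 + c + b * c)) by (apply Rmult_le_compat; nra).
  assert (0 <= b * (1 + c + b * c)) by nra.
  nra.
Qed.

Lemma psi_du_2_le : psi_du 2 u v w <= 8 * (1 + c + c ^ 2) ^ 2 / (27 * (1 + c)).
Proof using Hu0 Hv Hw.
  set (s := u * (1 + v)).
  assert (Hs : 0 <= s) by (unfold s; nra).
  assert (Hform : psi_du 2 u v w = 2 * (s / (1 + s) ^ 3) * ((1 + v + v * w) ^ 2 / (1 + v))).
  { unfold psi_du, s; simpl; field; split; nra. }
  assert (Ham : s / (1 + s) ^ 3 <= 4 / 27).
  { apply Rdiv_le_cross; [apply pow_lt; lra | lra |].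
    pose proof (cube_am_gm s Hs); lra. }
  rewrite Hform.
  replace (8 * (1 + c + c ^ 2) ^ 2 / (27 * (1 + c)))
    with (2 * (4 / 27) * ((1 + c + c ^ 2) ^ 2 / (1 + c))) by (field; lra).
  apply Rmult_le_compat.
  - apply Rmult_le_pos; [lra|]. apply Rdiv_le_0_compat; [lra | apply pow_lt; lra].
  - apply Rdiv_le_0_compat; [apply pow2_ge_0 | lra].
  - lra.
  - apply psi_num_sq_div_le; assumption.
Qed.

Lemma psi_du_ge3_le d : (3 <= d)%nat -> b * (1 + c) <= 1 ->
  psi_du d u v w <= INR d * b ^ (d - 1) * (1 + c + c ^ 2) ^ d / ((1 + b) * (1 + b + b * c) ^ d).
Proof using Hu0 Hub Hv Hw.
  intros Hd Hbc.
  set (N := 1 + v + v * w); set (E := 1 + b + b * v).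
  set (Nc := 1 + c + c ^ 2); set (Ec := 1 + b + b * c).
  assert (HE : 1 + b <= E) by (unfold E; nra).
  assert (HN : 0 <= N / E <= Nc / Ec).
  { split; [apply Rdiv_le_0_compat; unfold N; nra | apply psi_num_div_den_le; lra]. }
  assert (Hshift : u ^ (d - 1) / (1 + u + u * v) ^ (d + 1) <= b ^ (d - 1) / E ^ (d + 1)).
  { replace (d + 1)%nat with (d - 1 + 2)%nat by lia.
    replace (1 + u + u * v) with (1 + (1 + v) * u) by ring.
    replace E with (1 + (1 + v) * b) by (unfold E; ring).
    apply pow_div_pow_add2_le; [lia | lra | lra | nra]. }
  apply Rle_trans with (INR d * (b ^ (d - 1) / E ^ (d + 1)) * N ^ d).
  { replace (psi_du d u v w) with (INR d * (u ^ (d - 1) / (1 + u + u * v) ^ (d + 1)) * N ^ d)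
      by (unfold psi_du, N; field; apply pow_nonzero; nra).
    apply Rmult_le_compat_r; [apply pow_le; unfold N; nra |].
    apply Rmult_le_compat_l; [apply pos_INR | exact Hshift]. }
  replace (INR d * (b ^ (d - 1) / E ^ (d + 1)) * N ^ d) with (INR d * b ^ (d - 1) * (N / E) ^ d * / E)
    by (rewrite pow_div, pow_add; simpl pow; field; repeat split; try apply pow_nonzero; lra).
  replace (INR d * b ^ (d - 1) * Nc ^ d / ((1 + b) * Ec ^ d))
    with (INR d * b ^ (d - 1) * (Nc / Ec) ^ d * / (1 + b))
    by (rewrite pow_div; field; repeat split; try apply pow_nonzero; unfold Ec; nra).
  apply Rmult_le_compat.
  - apply Rmult_le_pos; [apply Rmult_le_pos; [apply pos_INR | apply pow_le; lra] | apply pow_le; lra].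
  - apply Rlt_le, Rinv_0_lt_compat; lra.
  - apply Rmult_le_compat_l; [apply Rmult_le_pos; [apply pos_INR | apply pow_le; lra] |].
    apply pow_incr; exact HN.
  - apply Rinv_le_contravar; lra.
Qed.

Lemma psi_dw_le d :
  psi_dw d u v w <= INR d * b ^ d * c * (1 + c + c ^ 2) ^ (d - 1) / (1 + b + b * c) ^ d.
Proof using Hu0 Hub Hv Hw.
  destruct d as [|m].
  { unfold psi_dw; rewrite INR_0; right; unfold Rdiv; ring. }
  rewrite Nat.sub_succ, Nat.sub_0_r.
  set (N := 1 + v + v * w); set (D := 1 + u + u * v); set (E := 1 + b + b * v).
  set (Nc := 1 + c + c ^ 2); set (Ec := 1 + b + b * c).
  assert (HD : 0 < D) by (unfold D; nra).
  assert (HE : 0 < E) by (unfold E; nra).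
  assert (HEc : 0 < Ec) by (unfold Ec; nra).
  assert (HN_ratio : 0 <= N / E <= Nc / Ec).
  { split; [apply Rdiv_le_0_compat; unfold N; nra | apply psi_num_div_den_le; lra]. }
  replace (psi_dw (S m) u v w) with (INR (S m) * (u / D) ^ S m * v * N ^ m)
    by (unfold psi_dw, D, N; rewrite pow_div, Nat.sub_succ, Nat.sub_0_r; field;
        repeat split; try apply pow_nonzero; nra).
  apply Rle_trans with (INR (S m) * (b / E) ^ S m * v * N ^ m).
  { apply Rmult_le_compat_r; [apply pow_le; unfold N; nra |].
    apply Rmult_le_compat_r; [lra |].
    apply Rmult_le_compat_l; [apply pos_INR |].
    apply pow_incr; split; [apply Rdiv_le_0_compat; lra | apply u_div_den_le]. }
  replace (INR (S m) * (b / E) ^ S m * v * N ^ m) with (INR (S m) * b ^ S m * (v / E) * (N / E) ^ m)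
    by (rewrite !pow_div; simpl pow; field; repeat split; try apply pow_nonzero; lra).
  replace (INR (S m) * b ^ S m * c * Nc ^ m / Ec ^ S m)
    with (INR (S m) * b ^ S m * (c / Ec) * (Nc / Ec) ^ m)
    by (rewrite !pow_div; simpl pow; field; repeat split; try apply pow_nonzero; lra).
  apply Rmult_le_compat.
  - apply Rmult_le_pos; [apply Rmult_le_pos; [apply pos_INR | apply pow_le; lra] |].
    apply Rdiv_le_0_compat; lra.
  - apply pow_le; lra.
  - apply Rmult_le_compat_l; [apply Rmult_le_pos; [apply pos_INR | apply pow_le; lra] | apply v_div_den_le].
  - apply pow_incr; exact HN_ratio.
Qed.

End PartialBounds.

Lemma abc_bounds d a b c : (2 <= d <= 7)%nat -> abc d = (a, b, c) ->
  0 <= a /\ 0 <= c <= b /\ ((3 <= d)%nat -> b * (1 + c) <= 1).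
Proof.
  intros Hd Habc.
  destruct d as [|[|[|[|[|[|[|[|d]]]]]]]]; try lia;
    injection Habc as <- <- <-; repeat split; intros; lra.
Qed.

Lemma in_S_bounds_around a b c x n : in_S a b c x -> 0 <= a -> c <= b -> (2 <= n)%nat ->
  0 <= x (n - 1)%nat <= b /\ 0 <= x n <= c /\ 0 <= x (n + 1)%nat <= c.
Proof.
  intros (_ & Hx1 & Hxn) Ha Hcb Hn.
  split; [| split; apply Hxn; lia].
  destruct (Nat.eq_dec n 2) as [-> | Hn2]; [simpl; lra |].
  specialize (Hxn (n - 1)%nat ltac:(lia)); lra.
Qed.

Theorem lemma2p12 (d : nat) (x : nat -> R) :
  (2 <= d <= 7)%nat ->
  let '(a, b, c) := abc d in
  in_S a b c x ->
  forall n : nat, (2 <= n)%nat ->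
    ((d = 2%nat) ->
       Rabs (dpsi_prev d n x) <=
         4 * INR d * (INR d - 1) ^ (d - 1) * (1 + c + c ^ 2) ^ d
         / ((INR d + 1) ^ (d + 1) * (1 + c) ^ (d - 1))) /\
    ((3 <= d)%nat ->
       Rabs (dpsi_prev d n x) <=
         INR d * b ^ (d - 1) * (1 + c + c ^ 2) ^ d
         / ((1 + b) * (1 + b + b * c) ^ d)) /\
    Rabs (dpsi_cur d n x) <= Rabs (dpsi_prev d n x) * (b * (1 + c + b * c)) /\
    Rabs (dpsi_next d n x) <=
      INR d * b ^ d * c * (1 + c + c ^ 2) ^ (d - 1) / (1 + b + b * c) ^ d.
Proof.
  intros Hd.
  destruct (abc d) as [[a b] c] eqn:Habc; intros Hx n Hn.
  destruct (abc_bounds d a b c Hd Habc) as (Ha & Hcb & Hbc).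
  destruct (in_S_bounds_around a b c x n Hx Ha (proj2 Hcb) Hn) as (Hu & Hv & Hw).
  unfold dpsi_prev, dpsi_cur, dpsi_next.
  set (u := x (n - 1)%nat) in *; set (v := x n) in *; set (w := x (n + 1)%nat) in *.
  assert (HD : 1 + u + u * v <> 0) by nra.
  rewrite (Derive_psi_u d u v w HD), (Derive_psi_v d u v w HD), (Derive_psi_w d u v w HD).
  rewrite (Rabs_pos_eq (psi_du d u v w)) by (apply psi_du_nonneg with c; lra).
  rewrite (Rabs_pos_eq (psi_dv d u v w)) by (apply psi_dv_nonneg with c; lra).
  rewrite (Rabs_pos_eq (psi_dw d u v w)) by (apply psi_dw_nonneg with c; lra).
  split; [| split; [| split]].
  - intros ->.
    apply Rle_trans with (8 * (1 + c + c ^ 2) ^ 2 / (27 * (1 + c))); [apply psi_du_2_le; lra |].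
    right; simpl; field; lra.
  - intros H3; apply psi_du_ge3_le; auto; lra.
  - apply psi_dv_le; lra.
  - apply psi_dw_le; lra.
Qed.
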